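(* Let $x_1,\dots,x_n$ be independent random variables in $[0,1]$ with $\mathbb{E}[x_i]\le\nu$ for all $i$, for some $\nu\in[0,1]$. For any $c\ge1$ with $c\nu<1$ and any $\lambda\in\big[0,\frac{\ln c}{(1-c\nu)(4n-3)}\big]$, $$\mathbb{E}\exp\big(\lambda(x_1+\dots+x_n)^2\big)\le\exp\big(\lambda cn\nu(1+cn\nu)\big).$$ *)

From HB Require Import structures.
From mathcomp Require Import all_boot all_order all_algebra.
From mathcomp Require Import all_classical all_reals all_analysis.
Set Implicit Arguments.
Unset Strict Implicit.
Unset Printing Implicit Defensive.
Import Order.TTheory GRing.Theory Num.Theory.
Local Open Scope classical_set_scope.
Local Open Scope ring_scope.

Definition mutually_independent d (T : measurableType d) (R : realType)
    (P : probability T R) (n : nat) (X : 'I_n -> {RV P >-> R}) : Prop :=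
  forall (S : {set 'I_n}) (B : 'I_n -> set R),
    (forall i, measurable (B i)) ->
    P (\bigcap_(i in [set j | j \in S]) (X i @^-1` B i)) =
    (\prod_(i in S) P (X i @^-1` B i))%E.

From HB Require Import structures.
From mathcomp Require Import all_boot all_order all_algebra.
From mathcomp Require Import all_classical all_reals all_analysis.
From mathcomp Require Import measurable_realfun ring lra.
Import Order.TTheory GRing.Theory Num.Theory numFieldNormedType.Exports.
Local Open Scope classical_set_scope.
Local Open Scope ring_scope.

(* Round each X_i up to the grid {0, 1/K, ..., 1}: this only increases the sum,
   raises each mean by at most 1/K, and turns the expectation into a finite sum
   over the cells of a product partition whose probabilities factor by
   independence.  For such discrete variables with means at most mu, induction on
   the number of variables, with potential (a + k c mu)^2 + k c mu, gives
   E exp(lam (a + S)^2) <= exp(lam ((a + n c mu)^2 + n c mu)).  Each step combines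
   the chord bound for the convex map v |-> exp(lam (b + v)^2) on [0, 1] with
   1 + mu (e^y - 1) <= e^(c mu y) for 0 <= y <= ln c / (1 - c mu), whose difference
   is nondecreasing in y.  Only lam (2n - 1) <= ln c / (1 - c mu) is used, which
   the assumption implies with room to spare; letting K -> oo and noting
   (n c nu)^2 + n c nu = c n nu (1 + c n nu) concludes. *)

Section ffun_cons.
Context {A : finType} {n : nat}.

Definition ffun_cons (x : A) (g : {ffun 'I_n -> A}) : {ffun 'I_n.+1 -> A} :=
  [ffun i => if unlift ord0 i is Some j then g j else x].

Lemma ffun_cons0 x g : ffun_cons x g ord0 = x.
Proof. by rewrite ffunE unlift_none. Qed.

Lemma ffun_consS x g j : ffun_cons x g (lift ord0 j) = g j.
Proof. by rewrite ffunE liftK. Qed.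

Lemma big_ffun_cons (R : Type) (idx : R) (op : Monoid.com_law idx)
    (F : {ffun 'I_n.+1 -> A} -> R) :
  \big[op/idx]_(f : {ffun 'I_n.+1 -> A}) F f =
  \big[op/idx]_(x : A) \big[op/idx]_(g : {ffun 'I_n -> A}) F (ffun_cons x g).
Proof.
pose uncons (f : {ffun 'I_n.+1 -> A}) := (f ord0, [ffun j => f (lift ord0 j)]).
have consK : cancel uncons (fun q => ffun_cons q.1 q.2).
  move=> f; apply/ffunP => i; rewrite ffunE.
  by case: unliftP => [j ->|->]; rewrite ?ffunE.
have unconsK : cancel (fun q => ffun_cons q.1 q.2) uncons.
  move=> [x g]; rewrite /uncons ffun_cons0; congr pair.
  by apply/ffunP => j; rewrite ffunE ffun_consS.
rewrite (reindex (fun q => ffun_cons q.1 q.2)); last by exists uncons.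
by rewrite pair_bigA.
Qed.

End ffun_cons.

Lemma sum_prod_ffun_cons (R : comPzSemiRingType) (J : finType) (n : nat)
    (F : R -> R) (v : J -> R) (p : 'I_n.+1 -> J -> R) :
  \sum_(f : {ffun 'I_n.+1 -> J}) F (\sum_i v (f i)) * \prod_i p i (f i) =
  \sum_x p ord0 x * \sum_(g : {ffun 'I_n -> J})
                      F (v x + \sum_i v (g i)) * \prod_i p (lift ord0 i) (g i).
Proof.
rewrite big_ffun_cons; apply: eq_bigr => x _; rewrite big_distrr.
apply: eq_bigr => g _; rewrite !big_ord_recl ffun_cons0.
have consS i : ffun_cons x g (lift ord0 i) = g i by exact: ffun_consS.
rewrite (eq_bigr _ (fun i _ => congr1 v (consS i))).
by rewrite (eq_bigr _ (fun i _ => congr1 (p (lift ord0 i)) (consS i))) mulrCA.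
Qed.

Section exponential_inequalities.
Variable R : realType.
Implicit Types c mu lam b v y : R.

Lemma is_derive_expRM (u x : R) :
  is_derive x 1 (fun y => expR (u * y)) (u * expR (u * x)).
Proof.
have lin : is_derive x 1 (u \*: (@id R)) (u *: (1 : R)) by apply: is_deriveZ.
have dlin := @ex_derive _ _ _ _ _ _ _ lin.
have dexp : derivable expR ((u \*: (@id R)) x) 1 by exact: derivable_expR.
have dc : derivable (expR \o (u \*: (@id R))) x 1.
  apply/derivable1_diffP/differentiable_comp; exact/derivable1_diffP.
apply: DeriveDef; first exact: dc.
rewrite -derive1E (derive1_comp dlin dexp) !derive1E derive_val mulrC.
by have := @derive_val _ _ _ _ _ _ _ lin; rewrite /GRing.scale /= mulr1 => ->.
Qed.

Lemma bernoulli_mgf_le_expR c mu y :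
  1 <= c -> 0 <= mu -> c * mu < 1 -> 0 <= y ->
  y <= ln c / (1 - c * mu) -> 1 + mu * (expR y - 1) <= expR (c * mu * y).
Proof.
move=> c1 mu0 cmu1 y0 yY.
set u := c * mu in cmu1 yY *.
pose g x := expR (u * x) - mu * expR x.
pose dg x := mu * expR x * (c * expR ((u - 1) * x) - 1).
have dgE (x : R) : is_derive x 1 g (dg x).
  have -> : dg x = u * expR (u * x) - mu *: expR x.
    rewrite /dg mulrBr mulr1 mulrCA -mulrA -expRD.
    by rewrite (_ : x + (u - 1) * x = u * x) ?mulrA //; ring.
  have -> : g = (fun y => expR (u * y)) - mu \*: expR by [].
  exact/is_deriveB/is_derive_expRM.
have dg_ge0 x : 0 <= x <= y -> 0 <= dg x.
  move=> /andP[x0 xy].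
  have xc : (1 - u) * x <= ln c.
    by rewrite mulrC -ler_pdivlMr; [exact: le_trans yY | lra].
  have : 1 <= c * expR ((u - 1) * x).
    rewrite -[c in c * _]lnK ?posrE; last lra.
    by rewrite -expRD -[X in X <= _]expR0 ler_expR; nra.
  by rewrite /dg -subr_ge0; apply: mulr_ge0; rewrite ?mulr_ge0 ?expR_ge0.
have gc : {within `[0, y], continuous g}.
  apply: continuous_subspaceT => x.
  exact/differentiable_continuous/derivable1_diffP/(@ex_derive _ _ _ _ _ _ _ (dgE x)).
have [z zy gE] := MVT_segment y0 (fun x _ => dgE x) gc.
have : 0 <= g y - g 0 by rewrite gE subr0 mulr_ge0 // dg_ge0 // !(itvP zy).
rewrite /g !mulr0 expR0 mulr1; lra.
Qed.

Lemma expR_sq_le_chord lam b v : 0 <= lam -> 0 <= v <= 1 ->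
  expR (lam * (b + v) ^+ 2)
  <= (1 - v) * expR (lam * b ^+ 2) + v * expR (lam * (b + 1) ^+ 2).
Proof.
move=> lam0 /andP[v0 v1].
have := convex_expR (@Itv01 _ _ v0 v1) (lam * (b + 1) ^+ 2) (lam * b ^+ 2).
rewrite !convRE /= /unstable.onem [_ + _ * expR _]addrC => /(le_trans _); apply.
rewrite ler_expR -subr_ge0.
have -> : v * (lam * (b + 1) ^+ 2) + (1 - v) * (lam * b ^+ 2) - lam * (b + v) ^+ 2
    = lam * (v * (1 - v)) by ring.
by rewrite mulr_ge0 // mulr_ge0 // subr_ge0.
Qed.

Lemma sum_expR_sq_shift_le (J : finType) (p v : J -> R) c mu lam b :
  1 <= c -> 0 <= mu -> c * mu < 1 -> 0 <= lam -> 0 <= b ->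
  (forall j, 0 <= p j) -> (forall j, 0 <= v j <= 1) ->
  \sum_j p j <= 1 -> \sum_j p j * v j <= mu ->
  lam * (2 * b + 1) <= ln c / (1 - c * mu) ->
  \sum_j p j * expR (lam * (b + v j) ^+ 2)
  <= expR (lam * ((b + c * mu) ^+ 2 + c * mu)).
Proof.
move=> c1 mu0 cmu1 lam0 b0 p0 v01 sump sumpv ylnc.
set E0 := expR (lam * b ^+ 2).
set y := lam * (2 * b + 1) in ylnc.
have E1E : expR (lam * (b + 1) ^+ 2) = E0 * expR y.
  by rewrite -expRD; congr expR; rewrite /y; ring.
have y0 : 0 <= y by rewrite mulr_ge0 //; lra.
have ey1 : 1 <= expR y by rewrite -expR0 ler_expR.
have E00 : 0 <= E0 by exact: expR_ge0.
apply: le_trans (_ : \sum_j p j * ((1 - v j) * E0 + v j * (E0 * expR y)) <= _).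
  by apply: ler_sum => j _; rewrite -E1E ler_wpM2l // expR_sq_le_chord.
have -> : \sum_j p j * ((1 - v j) * E0 + v j * (E0 * expR y))
    = E0 * ((\sum_j p j) + (\sum_j p j * v j) * (expR y - 1)).
  rewrite mulr_suml -big_split mulr_sumr /=; apply: eq_bigr => j _; ring.
apply: le_trans (_ : E0 * (1 + mu * (expR y - 1)) <= _).
  by rewrite ler_wpM2l // lerD // ler_wpM2r // subr_ge0.
apply: le_trans (_ : E0 * expR (c * mu * y) <= _).
  by rewrite ler_wpM2l // bernoulli_mgf_le_expR.
rewrite -expRD ler_expR /y -subr_ge0.
have -> : lam * ((b + c * mu) ^+ 2 + c * mu)
          - (lam * b ^+ 2 + c * mu * (lam * (2 * b + 1)))
    = lam * (c * mu) ^+ 2 by ring.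
by rewrite mulr_ge0 // sqr_ge0.
Qed.

Lemma sum_prod_expR_sq_le (J : finType) (v : J -> R) (c mu lam : R) (n : nat)
    (p : 'I_n -> J -> R) (a : R) :
  1 <= c -> 0 <= mu -> c * mu < 1 -> 0 <= lam -> 0 <= a ->
  (forall j, 0 <= v j <= 1) -> (forall i j, 0 <= p i j) ->
  (forall i, \sum_j p i j <= 1) -> (forall i, \sum_j p i j * v j <= mu) ->
  lam * (2 * (a + n%:R) - 1) <= ln c / (1 - c * mu) ->
  \sum_(f : {ffun 'I_n -> J}) expR (lam * (a + \sum_i v (f i)) ^+ 2) * \prod_i p i (f i)
  <= expR (lam * ((a + n%:R * (c * mu)) ^+ 2 + n%:R * (c * mu))).
Proof.
move=> c1 mu0 cmu1 lam0 + v01.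
have u1 : c * mu <= 1 by lra.
elim: n p a => [|n IH] p a a0 p0 sump sumpv lamc.
  rewrite (eq_bigr (fun=> expR (lam * a ^+ 2))) => [|f _]; last first.
    by rewrite !big_ord0 mulr1 addr0.
  by rewrite sumr_const card_ffun card_ord expn0 mulr1n mul0r !addr0.
set u := c * mu.
rewrite -[n.+1%:R]natr1 in lamc.
rewrite (sum_prod_ffun_cons _ _ _ (fun s => expR (lam * (a + s) ^+ 2))) /=.
apply: le_trans (_ : \sum_x p ord0 x
    * expR (lam * ((a + v x + n%:R * u) ^+ 2 + n%:R * u)) <= _).
  apply: ler_sum => x _; have /andP[vx0 vx1] := v01 x.
  apply: (ler_wpM2l (p0 ord0 x)); under eq_bigr do rewrite addrA.
  apply: (IH (fun i => p (lift ord0 i))) => //; first lra.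
  by apply: le_trans lamc; rewrite ler_wpM2l //; lra.
set b := a + n%:R * u.
have -> : \sum_x p ord0 x * expR (lam * ((a + v x + n%:R * u) ^+ 2 + n%:R * u))
    = (\sum_x p ord0 x * expR (lam * (b + v x) ^+ 2)) * expR (lam * (n%:R * u)).
  rewrite mulr_suml; apply: eq_bigr => x _.
  by rewrite -mulrA -expRD; congr (_ * expR _); rewrite /b; ring.
have -> : expR (lam * ((a + n.+1%:R * u) ^+ 2 + n.+1%:R * u))
    = expR (lam * ((b + u) ^+ 2 + u)) * expR (lam * (n%:R * u)).
  by rewrite -expRD -[n.+1%:R]natr1; congr expR; rewrite /b; ring.
have nu_le_n : n%:R * u <= n%:R by rewrite ler_piMr.
have u0 : 0 <= u by rewrite mulr_ge0 //; lra.
rewrite ler_wpM2r ?expR_ge0 //; apply: sum_expR_sq_shift_le => //.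
- by rewrite /b addr_ge0 // mulr_ge0.
- by apply: le_trans lamc; rewrite ler_wpM2l // /b; lra.
Qed.

End exponential_inequalities.

Section bins.
Context {R : realType} {K : nat}.
Hypothesis K_gt0 : (0 < K)%N.

Definition bin (j : 'I_K.+1) : set R :=
  if j == 0 :> nat then `]-oo, 0]%classic
  else `](j%:R - 1) / K%:R, j%:R / K%:R]%classic.

Lemma bin_measurable j : measurable (bin j).
Proof. by rewrite /bin; case: ifP => _; exact: measurable_itv. Qed.

Lemma in_bin j x : (x \in bin j) =
  if j == 0 :> nat then x <= 0 else ((j%:R - 1) / K%:R < x) && (x <= j%:R / K%:R).
Proof. by rewrite /bin; case: ifP => _; rewrite mem_setE in_itv /= ?andbT. Qed.

Let K_pos : 0 < K%:R :> R. Proof. by rewrite ltr0n. Qed.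

Lemma bin_round_up j x : 0 <= x -> x \in bin j ->
  x <= j%:R / K%:R <= x + K%:R^-1.
Proof.
move=> x0; rewrite in_bin; case: ifP => [/eqP-> x_le0|_ /andP[lo hi]].
  by rewrite mul0r x_le0 addr_ge0 // invr_ge0 ltW.
rewrite hi /= ler_pdivrMr // mulrDl mulVf ?gt_eqF //.
by move: lo; rewrite ltr_pdivrMr //; lra.
Qed.

Lemma sum_indic_bin x : 0 <= x <= 1 -> \sum_(j < K.+1) \1_(bin j) x = 1 :> R.
Proof.
move=> /andP[x0 x1].
pose below (k : nat) : R := ((x <= k%:R / K%:R)%R : bool)%:R.
have indicE' (j : 'I_K) : \1_(bin (lift ord0 j)) x = below j.+1 - below j.
  rewrite indicE in_bin /= /below -[j.+1%:R]natr1 addrK.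
  have : j%:R / K%:R <= (j%:R + 1) / K%:R :> R by rewrite ler_pM2r ?invr_gt0 //; lra.
  by case: (lerP x (j%:R / K%:R)); case: (lerP x ((j%:R + 1) / K%:R)) => //=; lra.
rewrite big_ord_recl (eq_bigr _ (fun j _ => indicE' j)).
rewrite -(big_mkord xpredT (fun j => below j.+1 - below j)) telescope_sumr //.
by rewrite indicE in_bin /= /below mul0r mulfV ?gt_eqF // x1 addrC subrK.
Qed.

Lemma sum_round_indic_bin_le x : 0 <= x <= 1 ->
  \sum_(j < K.+1) j%:R / K%:R * \1_(bin j) x <= x + K%:R^-1 :> R.
Proof.
move=> x01; have /andP[x0 _] := x01.
rewrite -[leRHS]mulr1 -[X in _ <= _ * X](sum_indic_bin _ x01) mulr_sumr ler_sum // => j _.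
rewrite indicE; case: (boolP (x \in bin j)) => [/(bin_round_up _ _ x0)/andP[_ hj]|_].
  by rewrite !mulr1.
by rewrite !mulr0.
Qed.

End bins.

Section discretization.
Context {d : measure_display} {T : measurableType d} {R : realType}
  (P : probability T R) {n : nat} (X : 'I_n -> {RV P >-> R}) (K : nat).
Hypothesis X_indep : mutually_independent X.
Hypothesis X01 : forall i t, 0 <= X i t <= 1.
Hypothesis K_gt0 : (0 < K)%N.
Implicit Types (i : 'I_n) (j : 'I_K.+1) (f : {ffun 'I_n -> 'I_K.+1}).

Let K_pos : 0 < K%:R :> R. Proof. by rewrite ltr0n. Qed.

Definition bin_event i j : set T := X i @^-1` bin j.

Definition bin_prob i j : R := fine (P (bin_event i j)).

Lemma bin_event_measurable i j : measurable (bin_event i j).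
Proof. exact: (measurable_funPTI (X i) (bin_measurable j)). Qed.

Lemma measurable_indic_bin i j :
  measurable_fun setT (fun t => \1_(bin j) (X i t) : R).
Proof.
exact: measurableT_comp (measurable_indic (bin_measurable j))
  (measurable_funP (X i)).
Qed.

Lemma bin_probE i j : (bin_prob i j)%:E = P (bin_event i j).
Proof.
rewrite fineK // ge0_fin_numE ?measure_ge0 //.
by rewrite (le_lt_trans (probability_le1 _ (bin_event_measurable i j))) // ltey.
Qed.

Lemma bin_prob_ge0 i j : 0 <= bin_prob i j.
Proof. exact/fine_ge0/measure_ge0. Qed.

Lemma bin_prob_integral i j :
  (bin_prob i j)%:E = (\int[P]_t (\1_(bin j) (X i t) : R)%:E)%E.
Proof.
rewrite bin_probE -(setIT (bin_event i j)) -integral_indic //.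
exact: bin_event_measurable.
Qed.

Lemma sum_bin_prob i : \sum_j bin_prob i j = 1.
Proof.
apply/eqP; rewrite -(@eqe R) -sumEFin.
under eq_bigr do rewrite bin_prob_integral.
rewrite -ge0_integral_sum //; last first.
  by move=> j; exact/measurable_EFinP/measurable_indic_bin.
rewrite (eq_integral (fun _ => 1%E)) => [|t _]; last by rewrite sumEFin sum_indic_bin.
rewrite integral_cst // mul1e; apply/eqP; exact: probability_setT.
Qed.

Lemma sum_bin_prob_round_le i nu : ('E_P[X i] <= nu%:E)%E ->
  \sum_j bin_prob i j * (j%:R / K%:R) <= nu + K%:R^-1.
Proof.
move=> EXi.
have mround j : measurable_fun setT (fun t => j%:R / K%:R * \1_(bin j) (X i t) : R).
  exact: measurable_funM (measurable_cst _) (measurable_indic_bin i j).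
have termE j : ((bin_prob i j * (j%:R / K%:R))%:E
    = \int[P]_t (j%:R / K%:R * \1_(bin j) (X i t))%:E)%E.
  have round_ge0 : 0 <= j%:R / K%:R :> R by rewrite divr_ge0 // ltW.
  rewrite mulrC EFinM bin_prob_integral -ge0_integralZl_EFin //.
  exact/measurable_EFinP/measurable_indic_bin.
rewrite -lee_fin -sumEFin; under eq_bigr do rewrite termE.
rewrite -ge0_integral_sum //; last first.
  by move=> j; exact/measurable_EFinP.
apply: le_trans (_ : \int[P]_t (X i t + K%:R^-1)%:E <= _)%E.
  apply: ge0_le_integral => //.
  - by move=> t _; rewrite sumEFin lee_fin sumr_ge0 // => j _;
      rewrite mulr_ge0 ?divr_ge0 ?indicE ?ler0n // ltW.
  - by apply: emeasurable_sum => j; exact/measurable_EFinP.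
  - exact/measurable_EFinP/measurable_funD.
  - by move=> t _; rewrite sumEFin lee_fin sum_round_indic_bin_le.
under eq_integral do rewrite EFinD.
rewrite ge0_integralD //; last 2 first.
- by move=> t _; rewrite lee_fin; have /andP[] := X01 i t.
- exact/measurable_EFinP/measurable_funP.
rewrite integral_cst // -expectation_def EFinD.
rewrite [X in (_ * X)%E](_ : _ = 1%E) ?mule1 ?leeD //; exact: probability_setT.
Qed.

(* Indexed as in [mutually_independent], so that independence applies verbatim. *)
Definition cell (f : {ffun 'I_n -> 'I_K.+1}) : set T :=
  \bigcap_(i in [set j | j \in [set: 'I_n]%SET]) bin_event i (f i).

Lemma cell_measurable f : measurable (cell f).
Proof.
apply: fin_bigcap_measurable; first exact: finite_finset.
by move=> i _; exact: bin_event_measurable.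
Qed.

Lemma prob_cell f : P (cell f) = (\prod_i bin_prob i (f i))%:E.
Proof.
rewrite /cell /bin_event X_indep; last by move=> i; exact: bin_measurable.
by rewrite -prodEFin; apply: eq_big => // i; rewrite ?inE ?bin_probE.
Qed.

Lemma in_cell f t : cell f t <-> forall i, X i t \in bin (f i).
Proof.
split=> [h i|h i _]; last exact/set_mem/h.
by apply/mem_set/h; rewrite /= inE.
Qed.

Lemma indic_cell f t : \1_(cell f) t = \prod_i \1_(bin (f i)) (X i t) :> R.
Proof.
rewrite indicE; case: (boolP (t \in cell f)) => [/set_mem/in_cell Ht|Ht].
  by rewrite big1 // => i _; rewrite indicE Ht.
have [i /negP Hi] : exists i, ~ (X i t \in bin (f i)).
  by apply/existsNP => Hall; move/negP: Ht; apply; exact/mem_set/in_cell.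
by rewrite (bigD1 i) //= indicE (negbTE Hi) mul0r.
Qed.

Lemma expR_sq_sum_le_cells lam t : 0 <= lam ->
  expR (lam * (\sum_i X i t) ^+ 2) <=
  \sum_(f : {ffun 'I_n -> 'I_K.+1})
    expR (lam * (\sum_i (f i)%:R / K%:R) ^+ 2) * \1_(cell f) t.
Proof.
move=> lam0.
have cells_cover : \sum_(f : {ffun 'I_n -> 'I_K.+1}) \1_(cell f) t = 1 :> R.
  have : \prod_i \sum_(j < K.+1) \1_(bin j) (X i t) = 1 :> R.
    by apply: big1 => i _; exact: sum_indic_bin.
  by move <-; rewrite bigA_distr_bigA; apply: eq_bigr => f _; rewrite indic_cell.
rewrite -[leLHS]mulr1 -[X in _ * X <= _]cells_cover mulr_sumr ler_sum // => f _.
rewrite indicE.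
case: (boolP (t \in cell f)) => [/set_mem/in_cell Ht|_]; last by rewrite !mulr0.
rewrite !mulr1 ler_expR ler_wpM2l // ler_sqr ?nnegrE ?sumr_ge0 // => [|i _].
- apply: ler_sum => i _; have /andP[Xi0 _] := X01 i t.
  by case/andP: (bin_round_up K_gt0 _ _ Xi0 (Ht i)).
- by case/andP: (X01 i t).
Qed.

Lemma integral_cells (a : {ffun 'I_n -> 'I_K.+1} -> R) : (forall f, 0 <= a f) ->
  (\int[P]_t (\sum_(f : {ffun 'I_n -> 'I_K.+1}) a f * \1_(cell f) t)%:E
   = (\sum_(f : {ffun 'I_n -> 'I_K.+1}) a f * \prod_i bin_prob i (f i))%:E)%E.
Proof.
move=> a0.
have mcell f : measurable_fun setT (fun t => (\1_(cell f) t : R)%:E).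
  exact/measurable_EFinP/measurable_indic/cell_measurable.
under eq_integral do rewrite -sumEFin.
rewrite ge0_integral_sum //; last first.
- by move=> f t _; rewrite lee_fin mulr_ge0 // indicE ler0n.
- move=> f; apply/measurable_EFinP.
  exact: measurable_funM (measurable_cst _) (measurable_indic (cell_measurable f)).
rewrite -sumEFin; apply: eq_bigr => f _.
under eq_integral do rewrite EFinM.
rewrite ge0_integralZl_EFin // integral_indic ?setIT //; last exact: cell_measurable.
by rewrite EFinM; congr (_ * _)%E; exact: prob_cell.
Qed.

Lemma integral_expR_sq_sum_le_discrete nu c lam :
  (forall i, ('E_P[X i] <= nu%:E)%E) -> 1 <= c -> 0 <= nu ->
  c * (nu + K%:R^-1) < 1 -> 0 <= lam ->
  lam * (2 * n%:R - 1) <= ln c / (1 - c * (nu + K%:R^-1)) ->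
  (\int[P]_t (expR (lam * (\sum_i X i t) ^+ 2))%:E <=
   (expR (lam * ((n%:R * (c * (nu + K%:R^-1))) ^+ 2
                 + n%:R * (c * (nu + K%:R^-1)))))%:E)%E.
Proof.
move=> EX c1 nu0 cmu1 lam0 lamc.
set mu := nu + K%:R^-1 in cmu1 lamc *.
apply: le_trans (_ : \int[P]_t (\sum_(f : {ffun 'I_n -> 'I_K.+1})
    expR (lam * (\sum_i (f i)%:R / K%:R) ^+ 2) * \1_(cell f) t)%:E <= _)%E.
  apply: ge0_le_integral => //.
  - apply/measurable_EFinP/measurableT_comp => //.
    apply: measurable_funM => //; apply: measurable_funX.
    by apply: measurable_sum => i; exact: measurable_funP.
  - apply/measurable_EFinP; apply: measurable_sum => f.
    exact: measurable_funM (measurable_cst _) (measurable_indic (cell_measurable f)).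
  - by move=> t _; rewrite lee_fin expR_sq_sum_le_cells.
rewrite integral_cells ?lee_fin => [|f]; last exact: expR_ge0.
have round01 j : 0 <= (j%:R / K%:R : R) <= 1.
  by rewrite divr_ge0 ?ler0n ?(ltW K_pos) //= ler_pdivrMr // mul1r ler_nat -ltnS.
rewrite (eq_bigr (fun f => expR (lam * (0 + \sum_i (f i)%:R / K%:R) ^+ 2)
                           * \prod_i bin_prob i (f i))) => [|f _]; last by rewrite add0r.
have := @sum_prod_expR_sq_le R _ (fun j => j%:R / K%:R) c mu lam n bin_prob 0.
rewrite [0 + n%:R * _]add0r [0 + n%:R]add0r; apply=> //.
- by rewrite addr_ge0 // invr_ge0 ltW.
- exact: bin_prob_ge0.
- by move=> i; rewrite sum_bin_prob.
- by move=> i; exact: sum_bin_prob_round_le.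
Qed.

End discretization.

Section limit.
Context {R : realType}.

Lemma cvg_shift_harmonic (c nu : R) : c * (nu + harmonic K) @[K --> \oo] --> c * nu.
Proof.
rewrite -[nu in X in _ --> X]addr0.
by apply: cvgMl_tmp; apply: cvgD; [exact: cvg_cst | exact: cvg_harmonic].
Qed.

Lemma cvg_expR_quad_harmonic (n : nat) (lam c nu : R) :
  expR (lam * ((n%:R * (c * (nu + harmonic K))) ^+ 2
               + n%:R * (c * (nu + harmonic K)))) @[K --> \oo]
  --> expR (lam * ((n%:R * (c * nu)) ^+ 2 + n%:R * (c * nu))).
Proof.
have cvg_nu : n%:R * (c * (nu + harmonic K)) @[K --> \oo] --> n%:R * (c * nu).
  by apply: cvgMl_tmp; exact: cvg_shift_harmonic.
apply: (continuous_cvg _ (@continuous_expR R _)).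
by apply: cvgMl_tmp; apply: cvgD => //; rewrite expr2; exact: cvgM.
Qed.

Lemma lee_EFin_lim (x : \bar R) (g : nat -> R) (l : R) :
  g @ \oo --> l -> (\forall K \near \oo, (x <= (g K)%:E)%E) -> (x <= l%:E)%E.
Proof.
move=> gl xg.
have gl' : (EFin \o g) @ \oo --> l%:E by apply: cvg_EFin; [exact: nearW | exact: gl].
by rewrite -(cvg_lim _ gl') //; apply: lime_ge => //; apply/cvg_ex; exists l%:E.
Qed.

End limit.

Lemma ln_div_weaken (R : realType) (n : nat) (lam c nu mu : R) :
  0 <= lam -> 1 <= c -> nu <= mu -> c * mu < 1 ->
  lam <= ln c / ((1 - c * nu) * (4 * n%:R - 3)) ->
  lam * (2 * n%:R - 1) <= ln c / (1 - c * mu).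
Proof.
move=> lam0 c1 numu cmu1 lamc.
have lnc0 : 0 <= ln c by exact: ln_ge0.
have cnu_le : c * nu <= c * mu by rewrite ler_wpM2l //; lra.
rewrite ler_pdivlMr; last lra.
case: n lamc => [|m] lamc.
  rewrite mulr0 sub0r mulrN1 mulNr; apply: le_trans lnc0.
  by rewrite oppr_le0 mulr_ge0 //; lra.
have m1 : 1 <= m.+1%:R :> R by rewrite ler1n.
move: lamc; rewrite ler_pdivlMr; last by apply: mulr_gt0; lra.
apply: le_trans; rewrite -mulrA ler_wpM2l // [X in _ <= X]mulrC.
by apply: ler_pM; lra.
Qed.

Theorem lemma4 (d : measure_display) (T : measurableType d) (R : realType)
    (P : probability T R) (n : nat) (X : 'I_n -> {RV P >-> R})
    (nu c lam : R) :
  mutually_independent X ->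
  (forall i t, 0 <= X i t <= 1) ->
  (forall i, ('E_P[X i] <= nu%:E)%E) ->
  0 <= nu <= 1 ->
  1 <= c -> c * nu < 1 ->
  0 <= lam -> lam <= ln c / ((1 - c * nu) * (4 * n%:R - 3)) ->
  (\int[P]_t (expR (lam * (\sum_(i < n) X i t) ^+ 2))%:E
     <= (expR (lam * c * n%:R * nu * (1 + c * n%:R * nu)))%:E)%E.
Proof.
move=> X_indep X01 EX /andP[nu0 _] c1 cnu1 lam0 lamc.
have -> : lam * c * n%:R * nu * (1 + c * n%:R * nu)
    = lam * ((n%:R * (c * nu)) ^+ 2 + n%:R * (c * nu)) by ring.
apply: lee_EFin_lim (cvg_expR_quad_harmonic n lam c nu) _.
apply: filterS (cvgr_lt _ (cvg_shift_harmonic c nu) _ cnu1) => K cK1.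
apply: integral_expR_sq_sum_le_discrete => //.
apply: ln_div_weaken lamc => //.
by rewrite lerDl.
Qed.
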